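(* There exists $\beta>\frac23$ such that, with $I=(\frac23,\beta)$, the function $\widetilde{M_f}$ defined in the context satisfies $\widetilde{M_f}(r)>0$ for all $r\in I$.
   Context: For $r>\frac23$ let $u_b(r)\in(\frac65,\frac43)$ be the unique $u\in(\frac65,\frac43)$ with $2-u+2q(1-u)=0$ at $q=1+\sqrt{\frac{r+u-2}{r+0.1}}$. Set $q_{f,\pm}(r)=1\pm\sqrt{\frac{r}{r+0.1}}$, $q_{b,\pm}(r)=1\pm\sqrt{\frac{r+u_b(r)-2}{r+0.1}}$, $S(r)=(q_{f,+}-2q_{f,-})+(q_{b,+}-2q_{b,-})$ and $D_0(r)=\frac{2(2-u_b(r))^2}{(r+0.1)S(r)^2}$ (equivalently, $D_0(r)>0$ together with some $\mu_0(r)$ solves $2+\mu=\frac12\sqrt{2D(r+0.1)}(q_{f,+}-2q_{f,-})$ and $u_b+\mu=-\frac12\sqrt{2D(r+0.1)}(q_{b,+}-2q_{b,-})$). Let $\phi(\chi)=(1+e^{-\frac{\sqrt2}{2}\chi})^{-1}$, $\kappa_f(r)=\frac12-\frac{q_{f,-}(r)}{q_{f,+}(r)}$ and $$\widetilde{M_f}(r)=-q_{f,+}(r)\sqrt{\frac{r+0.1}{D_0(r)}}\int_{-\infty}^{\infty}e^{-\sqrt2\kappa_f(r)\chi}\phi'(\chi)^2d\chi+\int_{-\infty}^{\infty}e^{-\sqrt2\kappa_f(r)\chi}\phi'(\chi)\phi(\chi)d\chi .$$ *)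

From Stdlib Require Import Reals Lra ClassicalEpsilon.
From Coquelicot Require Import Coquelicot.
Open Scope R_scope.

Definition c01 : R := 1 / 10.

Definition q_of (r u : R) : R := 1 + sqrt ((r + u - 2) / (r + c01)).

Definition ub_spec (r u : R) : Prop :=
  6/5 < u < 4/3 /\ 2 - u + 2 * q_of r u * (1 - u) = 0.

(* u_b(r): the unique u in (6/5,4/3) satisfying ub_spec (chosen by epsilon;
   existence and uniqueness for r > 2/3 are part of the paper's setting) *)
Definition u_b (r : R) : R := epsilon (inhabits 0) (ub_spec r).

Definition q_fp (r : R) : R := 1 + sqrt (r / (r + c01)).
Definition q_fm (r : R) : R := 1 - sqrt (r / (r + c01)).
Definition q_bp (r : R) : R := 1 + sqrt ((r + u_b r - 2) / (r + c01)).
Definition q_bm (r : R) : R := 1 - sqrt ((r + u_b r - 2) / (r + c01)).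

Definition S_fun (r : R) : R := (q_fp r - 2 * q_fm r) + (q_bp r - 2 * q_bm r).

Definition D0 (r : R) : R :=
  2 * (2 - u_b r) ^ 2 / ((r + c01) * (S_fun r) ^ 2).

Definition phi (chi : R) : R := / (1 + exp (- (sqrt 2 / 2) * chi)).

Definition kappa_f (r : R) : R := 1 / 2 - q_fm r / q_fp r.

Definition int_R (f : R -> R) : R :=
  RInt_gen f (Rbar_locally m_infty) (Rbar_locally p_infty).

Definition M_f_tilde (r : R) : R :=
  - q_fp r * sqrt ((r + c01) / D0 r) *
    int_R (fun chi => exp (- sqrt 2 * kappa_f r * chi) * (Derive phi chi) ^ 2)
  + int_R (fun chi => exp (- sqrt 2 * kappa_f r * chi) * Derive phi chi * phi chi).

From Stdlib Require Import Reals.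
From Coquelicot Require Import Coquelicot.
From Stdlib Require Import Lra Psatz Classical ClassicalEpsilon FunctionalExtensionality Ranalysis5.
Open Scope R_scope.

(* The profile phi is a logistic curve: phi' = c phi (1 - phi) with c = sqrt 2 / 2, and for
   0 <= kappa <= 1/2 the weight w(x) = exp (- sqrt 2 kappa x) satisfies w phi <= 1.  Writing A
   for the prefactor of the first integral, the integrand of M_f_tilde is therefore
   w phi' phi (1 - A c (1 - phi)), which is positive as soon as 0 <= A c <= 1; both integrals
   converge by comparison with phi', whose integral is 1.  Finally
   A c = q_{f,+} (r + 0.1) S / (2 (2 - u_b)), and just above r = 2/3 the quantity r + u_b - 2
   is tiny, which keeps A c below 1. *)

Lemma filterlim_incr_bounded_p_infty (F : R -> R) (M : R) :
  (forall x y, x <= y -> F x <= F y) -> (forall x, F x <= M) ->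
  exists l, filterlim F (Rbar_locally p_infty) (locally l) /\ forall x, F x <= l.
Proof.
  intros F_incr F_le.
  destruct (completeness (fun y => exists x, y = F x)) as [l [l_ub l_least]].
  - exists M; intros y [x ->]; apply F_le.
  - exists (F 0), 0; reflexivity.
  - assert (F_le_l : forall x, F x <= l) by (intros x; apply l_ub; exists x; reflexivity).
    exists l; split; [|exact F_le_l].
    apply filterlim_locally; intros eps.
    assert (eps_pos := cond_pos eps).
    assert (Hx0 : exists x0, l - eps < F x0).
    { apply NNPP; intros Hnot.
      assert (l <= l - eps); [|lra].
      apply l_least; intros y [x ->]; apply Rnot_lt_le; intros Hx; apply Hnot; exists x; lra. }
    destruct Hx0 as [x0 Hx0]; exists x0; intros x Hx.
    pose proof (F_incr x0 x ltac:(lra)); pose proof (F_le_l x).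
    apply Rabs_def1; simpl; unfold minus, plus, opp; simpl; lra.
Qed.

Lemma filterlim_incr_bounded_m_infty (F : R -> R) (M : R) :
  (forall x y, x <= y -> F x <= F y) -> (forall x, M <= F x) ->
  exists l, filterlim F (Rbar_locally m_infty) (locally l) /\ forall x, l <= F x.
Proof.
  intros F_incr F_ge.
  destruct (filterlim_incr_bounded_p_infty (fun x => - F (- x)) (- M)) as [l [Hlim Hle]].
  - intros x y Hxy; pose proof (F_incr (- y) (- x) ltac:(lra)); lra.
  - intros x; pose proof (F_ge (- x)); lra.
  - exists (- l); split.
    + apply filterlim_locally; intros eps.
      destruct (proj1 (filterlim_locally _ l) Hlim eps) as [N HN].
      exists (- N); intros x Hx.
      specialize (HN (- x) ltac:(lra)); rewrite Ropp_involutive in HN.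
      revert HN; unfold ball; simpl; unfold AbsRing_ball, abs, minus, plus, opp; simpl.
      intros HN; rewrite <- Rabs_Ropp; replace (- (F x + - - l)) with (- F x + - l) by ring; exact HN.
    + intros x; pose proof (Hle (- x)) as Hx; rewrite Ropp_involutive in Hx; lra.
Qed.

Section NonnegImproperIntegral.

Variables (f : R -> R) (M : R).
Hypothesis f_cont : forall x, continuous f x.
Hypothesis f_ge0 : forall x, 0 <= f x.
Hypothesis RInt_f_le : forall a b, a <= b -> RInt f a b <= M.

Let F x := RInt f 0 x.

Let ex_RInt_f a b : ex_RInt f a b.
Proof. apply (@ex_RInt_continuous R_CompleteNormedModule); intros; apply f_cont. Qed.

Let RInt_f_eq a b : RInt f a b = F b - F a.
Proof.
  assert (Chasles : RInt f 0 a + RInt f a b = RInt f 0 b)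
    by exact (RInt_Chasles f 0 a b (ex_RInt_f _ _) (ex_RInt_f _ _)).
  unfold F; lra.
Qed.

Let F_0 : F 0 = 0.
Proof. exact (RInt_point 0 f). Qed.

Let F_incr x y : x <= y -> F x <= F y.
Proof.
  intros Hxy; pose proof (RInt_ge_0 f x y Hxy (ex_RInt_f x y) (fun t _ => f_ge0 t)) as Hpos.
  rewrite RInt_f_eq in Hpos; lra.
Qed.

Let is_derive_F x : is_derive F x (f x).
Proof.
  apply is_derive_RInt with 0; [|apply f_cont].
  apply filter_forall; intros y; apply RInt_correct, ex_RInt_f.
Qed.

Let F_bounds x : - M <= F x <= M.
Proof.
  pose proof (RInt_f_le 0 0 (Rle_refl 0)) as M_ge0; rewrite RInt_f_eq in M_ge0.
  destruct (Rle_dec 0 x) as [Hx|Hx].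
  - pose proof (RInt_f_le 0 x Hx) as Hle; pose proof (F_incr 0 x Hx).
    rewrite RInt_f_eq, F_0 in *; lra.
  - pose proof (RInt_f_le x 0 ltac:(lra)) as Hle; pose proof (F_incr x 0 ltac:(lra)).
    rewrite RInt_f_eq, F_0 in *; lra.
Qed.

Lemma is_RInt_gen_nonneg_bounded :
  exists l, is_RInt_gen f (Rbar_locally m_infty) (Rbar_locally p_infty) l /\
    forall a b, a <= b -> RInt f a b <= l.
Proof.
  destruct (filterlim_incr_bounded_m_infty F (- M) F_incr) as [la [Hla la_le]];
    [intros x; apply F_bounds|].
  destruct (filterlim_incr_bounded_p_infty F M F_incr) as [lb [Hlb le_lb]];
    [intros x; apply F_bounds|].
  exists (lb - la); split.
  - apply (is_RInt_gen_ext (Derive F)).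
    + apply filter_forall; intros ab x _; apply is_derive_unique, is_derive_F.
    + apply is_RInt_gen_Derive; auto.
      * apply filter_forall; intros ab x _; eexists; apply is_derive_F.
      * apply filter_forall; intros ab x _.
        apply (continuous_ext f); [intros y; symmetry; apply is_derive_unique, is_derive_F|apply f_cont].
  - intros a b _; rewrite RInt_f_eq; pose proof (la_le a); pose proof (le_lb b); lra.
Qed.

End NonnegImproperIntegral.

Definition phi_rate : R := sqrt 2 / 2.

Lemma phi_rate_pos : 0 < phi_rate.
Proof. unfold phi_rate; pose proof (sqrt_lt_R0 2 ltac:(lra)); lra. Qed.

Lemma phi_rate_lt_1 : phi_rate < 1.
Proof.
  unfold phi_rate; pose proof (sqrt_sqrt 2 ltac:(lra)); pose proof (sqrt_pos 2); nra.
Qed.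

Lemma phi_bounds x : 0 < phi x < 1.
Proof.
  unfold phi; pose proof (exp_pos (- (sqrt 2 / 2) * x)); split.
  - apply Rinv_0_lt_compat; lra.
  - rewrite <- Rinv_1; apply Rinv_lt_contravar; lra.
Qed.

Lemma is_derive_phi x : is_derive phi x (phi_rate * phi x * (1 - phi x)).
Proof.
  unfold phi, phi_rate; pose proof (exp_pos (- (sqrt 2 / 2) * x)).
  auto_derive; [lra|field; lra].
Qed.

Lemma Derive_phi : Derive phi = fun x => phi_rate * phi x * (1 - phi x).
Proof. apply functional_extensionality; intros x; apply is_derive_unique, is_derive_phi. Qed.

Lemma ex_derive_phi x : ex_derive phi x.
Proof. eexists; apply is_derive_phi. Qed.

Lemma is_RInt_gen_le_Derive_phi (g : R -> R) :
  (forall x, continuous g x) -> (forall x, 0 <= g x <= Derive phi x) ->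
  exists l, is_RInt_gen g (Rbar_locally m_infty) (Rbar_locally p_infty) l /\ RInt g 0 1 <= l.
Proof.
  intros g_cont g_bounds.
  assert (Derive_phi_cont : forall x, continuous (Derive phi) x).
  { intros x; rewrite Derive_phi.
    apply (@ex_derive_continuous R_AbsRing R_NormedModule).
    auto_derive; repeat split; apply ex_derive_phi. }
  destruct (is_RInt_gen_nonneg_bounded g 1 g_cont) as [l [Hl Hle]].
  - intros x; apply g_bounds.
  - intros a b Hab.
    assert (RInt_le_Derive : RInt g a b <= RInt (Derive phi) a b).
    { apply RInt_le; auto; try (apply (@ex_RInt_continuous R_CompleteNormedModule); auto).
      intros; apply g_bounds. }
    rewrite RInt_Derive in RInt_le_Derive; auto.
    + pose proof (phi_bounds a); pose proof (phi_bounds b); lra.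
    + intros; apply ex_derive_phi.
  - exists l; split; auto; apply Hle; lra.
Qed.

Lemma logistic_integrand_bounds (w t c A : R) :
  0 < t < 1 -> 0 < w -> w * t <= 1 -> 0 < c <= 1 -> 0 <= A * c <= 1 ->
  let d := c * t * (1 - t) in
  (0 <= w * d ^ 2 <= d) /\ (0 <= w * d * t <= d) /\ (0 < w * d * t - A * (w * d ^ 2) <= d).
Proof.
  intros Ht Hw Hwt Hc HA d.
  assert (Hd : 0 < d) by (unfold d; apply Rmult_lt_0_compat; [apply Rmult_lt_0_compat|]; lra).
  replace (w * d * t - A * (w * d ^ 2)) with ((w * t) * d * (1 - A * c * (1 - t))) by (unfold d; ring).
  replace (w * d ^ 2) with ((w * t) * (c * (1 - t)) * d) by (unfold d; ring).
  replace (w * d * t) with ((w * t) * d) by ring.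
  assert (0 < w * t) by nra.
  assert (0 <= c * (1 - t) <= 1) by nra.
  assert (0 < 1 - A * c * (1 - t) <= 1) by nra.
  set (p := w * t) in *; set (q := c * (1 - t)) in *; set (s := 1 - A * c * (1 - t)) in *.
  clearbody p q s d.
  assert (p * q <= 1) by nra; assert (p * s <= 1) by nra.
  split; [|split]; split.
  - apply Rmult_le_pos; [apply Rmult_le_pos|]; lra.
  - nra.
  - nra.
  - nra.
  - apply Rmult_lt_0_compat; [apply Rmult_lt_0_compat|]; lra.
  - nra.
Qed.

Lemma exp_le_compat x y : x <= y -> exp x <= exp y.
Proof. intros [Hlt|Heq]; [left; apply exp_increasing; exact Hlt|right; rewrite Heq; reflexivity]. Qed.

Lemma exp_weight_mul_phi_le_1 k x : 0 <= k <= 1/2 -> exp (- sqrt 2 * k * x) * phi x <= 1.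
Proof.
  intros Hk.
  pose proof phi_rate_pos as Hc; unfold phi_rate in Hc.
  assert (HE := exp_pos (- (sqrt 2 / 2) * x)).
  assert (weight_le : exp (- sqrt 2 * k * x) <= 1 + exp (- (sqrt 2 / 2) * x)).
  { destruct (Rle_dec 0 x) as [Hx|Hx].
    - assert (w_le : exp (- sqrt 2 * k * x) <= exp 0); [|rewrite exp_0 in w_le; lra].
      apply exp_le_compat.
      assert (0 <= sqrt 2 / 2 * k * x) by (apply Rmult_le_pos; [apply Rmult_le_pos|]; lra); lra.
    - assert (exp (- sqrt 2 * k * x) <= exp (- (sqrt 2 / 2) * x)); [|lra].
      apply exp_le_compat.
      assert (0 <= sqrt 2 / 2 * (- x) * (1 - 2 * k)) by (apply Rmult_le_pos; [apply Rmult_le_pos|]; lra); lra. }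
  unfold phi; apply (Rmult_le_reg_r (1 + exp (- (sqrt 2 / 2) * x))); [lra|].
  rewrite Rmult_assoc, Rinv_l, Rmult_1_r, Rmult_1_l by lra; exact weight_le.
Qed.

Lemma weighted_phi_integrals_pos k A :
  0 <= k <= 1/2 -> 0 <= A * phi_rate <= 1 ->
  - A * int_R (fun x => exp (- sqrt 2 * k * x) * Derive phi x ^ 2)
  + int_R (fun x => exp (- sqrt 2 * k * x) * Derive phi x * phi x) > 0.
Proof.
  intros Hk HA.
  set (f1 := fun x => exp (- sqrt 2 * k * x) * Derive phi x ^ 2).
  set (f2 := fun x => exp (- sqrt 2 * k * x) * Derive phi x * phi x).
  set (h := fun x => f2 x - A * f1 x).
  assert (bounds : forall x, (0 <= f1 x <= Derive phi x) /\ (0 <= f2 x <= Derive phi x) /\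
                             (0 < h x <= Derive phi x)).
  { intros x; unfold h, f1, f2; rewrite Derive_phi.
    apply logistic_integrand_bounds; auto using phi_bounds, exp_pos, exp_weight_mul_phi_le_1.
    pose proof phi_rate_pos; pose proof phi_rate_lt_1; lra. }
  assert (continuity : forall x, continuous f1 x /\ continuous f2 x /\ continuous h x).
  { intros x; unfold h, f1, f2; rewrite Derive_phi.
    repeat split; apply (@ex_derive_continuous R_AbsRing R_NormedModule);
      auto_derive; repeat split; apply ex_derive_phi. }
  destruct (is_RInt_gen_le_Derive_phi f1) as [l1 [Hl1 _]];
    [apply continuity|intros x; apply (bounds x)|].
  destruct (is_RInt_gen_le_Derive_phi f2) as [l2 [Hl2 _]];
    [apply continuity|intros x; apply (bounds x)|].
  destruct (is_RInt_gen_le_Derive_phi h) as [lh [Hlh lh_ge]];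
    [apply continuity| |].
  { intros x; destruct (bounds x) as (_ & _ & [h_pos h_le]); split; [left|]; assumption. }
  assert (lh_eq : lh = l2 - A * l1).
  { assert (Hcomb := is_RInt_gen_minus f2 _ l2 _ Hl2 (is_RInt_gen_scal f1 A l1 Hl1)).
    change (is_RInt_gen h (Rbar_locally m_infty) (Rbar_locally p_infty) (l2 - A * l1)) in Hcomb.
    rewrite <- (is_RInt_gen_unique h lh Hlh); exact (is_RInt_gen_unique h _ Hcomb). }
  assert (RInt_h_pos : RInt (fun _ => 0) 0 1 < RInt h 0 1).
  { apply RInt_lt; [lra|intros; apply continuity|intros; apply continuous_const|].
    intros x _; apply (bounds x). }
  rewrite RInt_const in RInt_h_pos; change (scal (1 - 0) 0) with ((1 - 0) * 0) in RInt_h_pos.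
  unfold int_R; rewrite (is_RInt_gen_unique f1 l1 Hl1), (is_RInt_gen_unique f2 l2 Hl2).
  clearbody f1 f2 h; lra.
Qed.

Definition root_f (r : R) : R := sqrt (r / (r + c01)).
Definition root_b (r : R) : R := sqrt ((r + u_b r - 2) / (r + c01)).

Lemma ub_spec_exists r : 2/3 < r -> exists u, ub_spec r u.
Proof.
  (* With b := q - 1 the defining equation reads u = (4 + 2 b) / (3 + 2 b), and p b = 0 says
     that b is the required square root. *)
  intros Hr; unfold c01 in *.
  set (p := fun b => b ^ 2 * (r + 1/10) - (r + (4 + 2 * b) / (3 + 2 * b) - 2)).
  assert (p0 : p 0 = 2/3 - r) by (unfold p; field).
  assert (p1 : p 1 = 9/10) by (unfold p; field).
  destruct (IVT_interv p 0 1) as [b [Hb pb]]; [|lra|lra|lra|].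
  - intros x Hx; apply continuity_pt_filterlim, (@ex_derive_continuous R_AbsRing R_NormedModule).
    unfold p; auto_derive; lra.
  - assert (b <> 0) by (intros E; rewrite E, p0 in pb; lra).
    assert (b <> 1) by (intros E; rewrite E, p1 in pb; lra).
    assert (b_bounds : 0 < b < 1) by lra.
    set (u := (4 + 2 * b) / (3 + 2 * b)).
    assert (Hu : u * (3 + 2 * b) = 4 + 2 * b) by (unfold u; field; lra).
    assert (Hq : q_of r u = 1 + b).
    { unfold q_of, c01; f_equal.
      replace ((r + u - 2) / (r + 1/10)) with (b ^ 2); [apply sqrt_pow2; lra|].
      unfold p in pb; fold u in pb.
      replace (r + u - 2) with (b ^ 2 * (r + 1/10)) by lra; field; lra. }
    exists u; unfold ub_spec; rewrite Hq; split; [split|]; nra.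
Qed.

Lemma u_b_spec r : 2/3 < r -> ub_spec r (u_b r).
Proof. intros Hr; unfold u_b; apply epsilon_spec, ub_spec_exists, Hr. Qed.

Lemma u_b_bounds r : 2/3 < r -> 6/5 < u_b r < 4/3.
Proof. intros Hr; apply u_b_spec, Hr. Qed.

Lemma root_b_pos r : 2/3 < r -> 0 < root_b r.
Proof.
  intros Hr; destruct (u_b_spec r Hr) as [Hu Heq]; unfold q_of in Heq; fold (root_b r) in Heq.
  destruct (sqrt_pos ((r + u_b r - 2) / (r + c01))) as [Hpos|Hzero]; [exact Hpos|].
  fold (root_b r) in Hzero; rewrite <- Hzero in Heq; lra.
Qed.

Lemma root_b_sq r : 2/3 < r -> root_b r ^ 2 * (r + c01) = r + u_b r - 2.
Proof.
  intros Hr; pose proof (root_b_pos r Hr) as Hb; unfold root_b in *; unfold c01 in *.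
  destruct (Rle_or_lt 0 ((r + u_b r - 2) / (r + 1/10))) as [Hnn|Hneg].
  - rewrite <- Rsqr_pow2, Rsqr_sqrt by exact Hnn; field; lra.
  - rewrite sqrt_neg_0 in Hb; lra.
Qed.

Lemma root_f_sq r : 0 <= r -> root_f r ^ 2 * (r + c01) = r.
Proof.
  intros Hr; unfold root_f, c01.
  rewrite <- Rsqr_pow2, Rsqr_sqrt by (apply Rdiv_le_0_compat; lra); field; lra.
Qed.

Lemma S_fun_eq r : S_fun r = 3 * root_f r + 3 * root_b r - 2.
Proof. unfold S_fun, q_fp, q_fm, q_bp, q_bm, root_f, root_b; ring. Qed.

Lemma kappa_f_range r : 1/80 <= r -> 0 <= kappa_f r <= 1/2.
Proof.
  intros Hr; pose proof (root_f_sq r ltac:(lra)) as Ha; unfold c01 in Ha.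
  assert (a_nn : 0 <= root_f r) by apply sqrt_pos.
  assert (a_sq : 1/9 <= root_f r ^ 2 <= 1) by (split; nra).
  assert (a_ge : 1/3 <= root_f r) by nra.
  assert (a_le : root_f r <= 1) by nra.
  unfold kappa_f, q_fm, q_fp; fold (root_f r).
  assert (Hq : 0 <= (1 - root_f r) / (1 + root_f r) <= 1/2).
  { split; [apply Rdiv_le_0_compat; lra|].
    apply Rmult_le_reg_r with (1 + root_f r); [lra|].
    unfold Rdiv; rewrite Rmult_assoc, Rinv_l, Rmult_1_r by lra; lra. }
  lra.
Qed.

Lemma S_fun_pos r : 2/3 < r -> 0 < S_fun r.
Proof.
  intros Hr; rewrite S_fun_eq; pose proof (root_b_pos r Hr).
  pose proof (root_f_sq r ltac:(lra)) as Ha; unfold c01 in Ha.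
  assert (0 <= root_f r) by apply sqrt_pos.
  assert (4/9 < root_f r ^ 2) by nra.
  assert (2/3 < root_f r) by nra.
  lra.
Qed.

Lemma sqrt_ratio_D0_eq r : 2/3 < r ->
  sqrt ((r + c01) / D0 r) * phi_rate = (r + c01) * S_fun r / (2 * (2 - u_b r)).
Proof.
  intros Hr; pose proof (S_fun_pos r Hr); pose proof (u_b_bounds r Hr); unfold c01 in *.
  set (X := (r + 1/10) * S_fun r / (2 - u_b r)).
  assert (X_pos : 0 <= X) by (apply Rdiv_le_0_compat; [apply Rmult_le_pos|]; lra).
  replace ((r + 1/10) / D0 r) with (X ^ 2 / 2) by (unfold X, D0, c01; field; repeat split; lra).
  rewrite sqrt_div_alt, sqrt_pow2 by lra.
  unfold X, phi_rate; field; pose proof (sqrt_lt_R0 2 ltac:(lra)); lra.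
Qed.

(* Small enough that r + u_b r - 2 < r_max - 2/3 forces root_b r <= 21/1000. *)
Definition r_max : R := 2/3 + 1/3000.

Lemma prefactor_range r : 2/3 < r < r_max ->
  0 <= q_fp r * sqrt ((r + c01) / D0 r) * phi_rate <= 1.
Proof.
  intros Hr; unfold r_max in Hr.
  rewrite Rmult_assoc, sqrt_ratio_D0_eq, S_fun_eq by lra.
  pose proof (u_b_bounds r ltac:(lra)) as Hu.
  pose proof (root_b_pos r ltac:(lra)) as Hb; pose proof (root_b_sq r ltac:(lra)) as Hb2.
  pose proof (root_f_sq r ltac:(lra)) as Ha2.
  assert (0 <= root_f r) by apply sqrt_pos.
  unfold q_fp; fold (root_f r); unfold c01 in *.
  set (a := root_f r) in *; set (b := root_b r) in *; set (u := u_b r) in *.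
  assert (a_range : 93/100 <= a <= 933/1000) by (split; nra).
  assert (b_le : b <= 21/1000) by nra.
  assert (num_le : (1 + a) * ((r + 1/10) * (3 * a + 3 * b - 2)) <= 2 * (2 - u)).
  { assert (0 <= (r + 1/10) * (3 * a + 3 * b - 2) <= 7671/10000 * 862/1000) by (split; nra).
    nra. }
  split.
  - apply Rmult_le_pos; [lra|]; apply Rdiv_le_0_compat; [apply Rmult_le_pos|]; lra.
  - unfold Rdiv; rewrite <- Rmult_assoc.
    apply Rmult_le_reg_r with (2 * (2 - u)); [lra|].
    rewrite Rmult_assoc, Rinv_l, Rmult_1_r by lra; lra.
Qed.

Theorem theorem3 :
  exists beta : R, 2 / 3 < beta /\
    forall r : R, 2 / 3 < r < beta -> M_f_tilde r > 0.
Proof.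
  exists r_max; split; [unfold r_max; lra|].
  intros r Hr; unfold M_f_tilde; rewrite <- Ropp_mult_distr_l.
  apply weighted_phi_integrals_pos.
  - apply kappa_f_range; lra.
  - apply prefactor_range, Hr.
Qed.
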